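(* Let $D_{act} > 0$ be the duration of an activity period and $D_{sleep} \ge 0$ the duration of the sleep period, so that a duty cycle has duration $D_{act}+D_{sleep}$, and define the capacity $C_{RTXP} = \left\lfloor \frac{D_{act}+D_{sleep}}{D_{act}} \right\rfloor$. Let $n \in \mathbb{N}$ be a hop-count and let $p \in \mathbb{N}$ be the number of packets present in a 2-hop neighborhood of nodes at hop-count $n$ at the start of a duty cycle. Assume packets can be lost only through collisions, that coordinates are unique in every 2-hop neighborhood and the backoff function is bijective. If $p < C_{RTXP}$, then every one of these $p$ packets reaches a node at hop-count $n-1$ within at most one duty-cycle period.
   Context: Protocol model (RTXP): nodes are globally synchronized and duty-cycled. Each duty cycle consists of a sequence of activity periods, each of duration $D_{act}$, followed by sleeping, the total duty-cycle duration being $D_{act}+D_{sleep}$. In each activity period, nodes at hop-count $n$ (distance in hops to the sink) holding a packet contend for the channel in a backoff phase: each node's backoff time is $f(c)$ where $c$ is its virtual coordinate and $f$ a fixed function; the node whose backoff timer expires first sends a jamming code and wins; nodes detecting a jamming code earlier lose (2-hop interference model: nodes detect jamming codes of all nodes within two hops). The winner transmits its packet, which is received by neighbors at hop-count $n-1$, one of which forwards it. A node that loses the contention may request a further (secondary) activity period immediately following the current one, so that contention is repeated in successive activity periods until the end of the duty cycle. Thus in each activity period one packet in a 2-hop neighborhood wins the contention and makes one hop, and a duty cycle contains at most $C_{RTXP}$ activity periods. *)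

From Stdlib Require Import Reals Lra Lia ZArith Arith List.
Import ListNotations.
Open Scope R_scope.

Definition capacity (Dact Dsleep : R) : nat :=
  Z.to_nat (Int_part ((Dact + Dsleep) / Dact)).

Definition bijectiveR (f : R -> R) : Prop :=
  (forall x y, f x = f y -> x = y) /\ (forall y, exists x, f x = y).

(* Outcome of a packet during the duty cycle: delivered (made one hop, i.e.
   received by the nodes at hop-count n-1) during activity period k, or lost
   (collision) during activity period k. Activity periods are numbered from 0. *)
Inductive outcome : Type :=
| Delivered (k : nat)
| Lost (k : nat).

Definition backoff (f : R -> R) (coord : nat -> R) (holder : nat -> nat) (i : nat) : R :=
  f (coord (holder i)).

Definition min_backoff (bo : nat -> R) (l : list nat) : R :=
  match l with
  | [] => 0
  | i :: l' => fold_right (fun j m => Rmin (bo j) m) (bo i) l'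
  end.

Definition contenders (bo : nat -> R) (l : list nat) : list nat :=
  filter (fun i => if Req_EM_T (bo i) (min_backoff bo l) then true else false) l.

(* Run the contention over successive activity periods.
   [fuel] = remaining activity periods in the duty cycle, [k] = index of the
   current activity period, [l] = packets still pending in the 2-hop
   neighborhood.  In each period the node(s) with the earliest backoff win;
   if they are a single node, it transmits one of its packets (one hop),
   otherwise the simultaneous jamming codes collide and the contenders'
   packets are lost. *)
Fixpoint run (bo : nat -> R) (holder : nat -> nat) (fuel k : nat) (l : list nat)
  : list (nat * outcome) :=
  match fuel with
  | O => []
  | S fuel' =>
    match contenders bo l with
    | [] => []
    | w :: ws =>
      if forallb (fun j => Nat.eqb (holder j) (holder w)) ws
      then (w, Delivered k) :: run bo holder fuel' (S k) (filter (fun j => negb (Nat.eqb j w)) l)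
      else map (fun j => (j, Lost k)) (w :: ws)
           ++ run bo holder fuel' (S k)
                (filter (fun j => negb (existsb (Nat.eqb j) (w :: ws))) l)
    end
  end.

From Stdlib Require Import Reals Lra Lia ZArith Arith List.
Open Scope R_scope.

(* Once backoff times determine the packet holder (two pending
   packets with equal backoff belong to the same node), every activity period
   in which some packet is pending has a unique winning node: the contenders,
   i.e. the packets with minimal backoff, all belong to it, so no collision
   happens and exactly one packet makes its hop.  Hence with at least as many
   periods as pending packets, every packet is delivered, the i-th delivery
   happening in a period of index below the number of packets.

   Separately, the
   capacity bound turns "period index < capacity" into the timing bound, and
   unique coordinates with an injective backoff function provide the
   hypothesis that backoffs determine holders. *)

Section Contention.
Variable bo : nat -> R.
Variable holder : nat -> nat.

Lemma fold_min_spec (a : R) (l : list nat) :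
  let m := fold_right (fun j m => Rmin (bo j) m) a l in
  m <= a /\ (forall j, In j l -> m <= bo j) /\ (m = a \/ exists j, In j l /\ bo j = m).
Proof.
  induction l as [|x l [Ha [Hlow Hatt]]]; simpl.
  - split; [lra|]. split; [tauto|]. now left.
  - set (m0 := fold_right (fun j m => Rmin (bo j) m) a l) in *.
    pose proof (Rmin_l (bo x) m0); pose proof (Rmin_r (bo x) m0).
    split; [lra|]. split.
    + intros j [<-|Hj]; [lra|]. specialize (Hlow j Hj); lra.
    + apply Rmin_case; [right; exists x; auto|].
      destruct Hatt as [Hm|[j [Hj Hb]]]; [now left|right; exists j; auto].
Qed.

Lemma min_backoff_spec (l : list nat) : l <> nil ->
  (forall j, In j l -> min_backoff bo l <= bo j) /\
  exists j, In j l /\ bo j = min_backoff bo l.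
Proof.
  destruct l as [|i l']; [congruence|]. intros _. simpl.
  destruct (fold_min_spec (bo i) l') as [Hi [Hlow Hatt]].
  split.
  - intros j [<-|Hj]; auto.
  - destruct Hatt as [Hm|[j [Hj Hb]]]; [exists i|exists j]; auto.
Qed.

Lemma In_contenders l w :
  In w (contenders bo l) <-> In w l /\ bo w = min_backoff bo l.
Proof.
  unfold contenders. rewrite filter_In.
  destruct (Req_EM_T _ _); intuition congruence.
Qed.

Lemma contenders_nonempty l : l <> nil -> contenders bo l <> nil.
Proof.
  intros Hl E. destruct (min_backoff_spec l Hl) as [_ [j Hj]].
  apply (In_contenders l j) in Hj. rewrite E in Hj. inversion Hj.
Qed.

Lemma length_filter_removed w l : In w l ->
  (length (filter (fun j => negb (Nat.eqb j w)) l) < length l)%nat.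
Proof.
  induction l as [|x l IH]; simpl; [tauto|].
  intros [<-|Hw].
  - rewrite Nat.eqb_refl. simpl.
    pose proof (filter_length_le (fun j => negb (Nat.eqb j x)) l). lia.
  - specialize (IH Hw). destruct (negb _); simpl; lia.
Qed.

Definition backoff_determines_holder (l : list nat) : Prop :=
  forall a b, In a l -> In b l -> bo a = bo b -> holder a = holder b.

Lemma run_step_delivers fuel k0 l : l <> nil -> backoff_determines_holder l ->
  exists w, In w l /\
    run bo holder (S fuel) k0 l =
    (w, Delivered k0) :: run bo holder fuel (S k0) (filter (fun j => negb (Nat.eqb j w)) l).
Proof.
  intros Hne Hdet. simpl.
  pose proof (contenders_nonempty l Hne) as Hc.
  destruct (contenders bo l) as [|w ws] eqn:E; [congruence|].
  assert (Hw : In w l /\ bo w = min_backoff bo l)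
    by (apply In_contenders; rewrite E; now left).
  assert (Hsame : forallb (fun j => Nat.eqb (holder j) (holder w)) ws = true).
  { apply forallb_forall. intros j Hj.
    assert (Hj' : In j l /\ bo j = min_backoff bo l)
      by (apply In_contenders; rewrite E; now right).
    apply Nat.eqb_eq, Hdet; [tauto|tauto|destruct Hj', Hw; congruence]. }
  rewrite Hsame. exists w. now split; [apply Hw|].
Qed.

Lemma run_delivers_all fuel : forall k0 l i,
  backoff_determines_holder l -> (length l <= fuel)%nat -> In i l ->
  exists k, In (i, Delivered k) (run bo holder fuel k0 l) /\
            (k0 <= k < k0 + length l)%nat.
Proof.
  induction fuel as [|fuel IH]; intros k0 l i Hdet Hlen Hi.
  { destruct l; simpl in *; [tauto|lia]. }
  assert (Hne : l <> nil) by (intros ->; inversion Hi).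
  destruct (run_step_delivers fuel k0 l Hne Hdet) as [w [Hw ->]].
  destruct (Nat.eq_dec i w) as [->|Hiw].
  { exists k0. split; [now left|]. destruct l; [congruence|simpl; lia]. }
  set (l' := filter (fun j => negb (Nat.eqb j w)) l).
  assert (Hsub : forall j, In j l' <-> In j l /\ j <> w).
  { intro j. unfold l'. rewrite filter_In, Bool.negb_true_iff, Nat.eqb_neq. tauto. }
  assert (Hshort : (length l' < length l)%nat) by apply (length_filter_removed w l Hw).
  destruct (IH (S k0) l' i) as [k [Hk Hrange]].
  - intros a b Ha Hb. apply Hdet; [apply Hsub in Ha|apply Hsub in Hb]; tauto.
  - lia.
  - now apply Hsub.
  - exists k. split; [now right|lia].
Qed.

End Contention.

Lemma periods_fit_duty_cycle (Dact Dsleep : R) (m : nat) :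
  0 < Dact -> 0 <= Dsleep -> (m <= capacity Dact Dsleep)%nat ->
  INR m * Dact <= Dact + Dsleep.
Proof.
  intros HD HS Hm.
  destruct m as [|m]; [rewrite Rmult_0_l; lra|].
  unfold capacity in Hm. set (x := (Dact + Dsleep) / Dact) in *.
  destruct (base_Int_part x) as [Hfloor _].
  assert (Hz : IZR (Z.of_nat (S m)) <= IZR (Int_part x)) by (apply IZR_le; lia).
  rewrite <- INR_IZR_INZ in Hz.
  assert (Hcycle : x * Dact = Dact + Dsleep) by (unfold x; field; lra).
  rewrite <- Hcycle. apply Rmult_le_compat_r; lra.
Qed.

Lemma unique_coords_determine_holder (p : nat)
  (holder : nat -> nat) (coord : nat -> R) (f : R -> R) :
  (forall x y, f x = f y -> x = y) ->
  (forall a b, In a (map holder (seq 0 p)) -> In b (map holder (seq 0 p)) ->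
     a <> b -> coord a <> coord b) ->
  backoff_determines_holder (backoff f coord holder) holder (seq 0 p).
Proof.
  intros Hinj Huniq a b Ha Hb Hab. unfold backoff in Hab. apply Hinj in Hab.
  destruct (Nat.eq_dec (holder a) (holder b)) as [Heq|Hne]; [exact Heq|].
  exfalso. exact (Huniq _ _ (in_map holder _ a Ha) (in_map holder _ b Hb) Hne Hab).
Qed.

Theorem mainTheorem2
  (Dact Dsleep : R) (n p : nat)
  (hop : nat -> nat) (holder : nat -> nat) (coord : nat -> R) (f : R -> R) :
  0 < Dact -> 0 <= Dsleep ->
  (* the p packets are held by nodes at hop-count n *)
  (forall i, (i < p)%nat -> hop (holder i) = n) ->
  (* coordinates are unique in the 2-hop neighborhood *)
  (forall a b, In a (map holder (seq 0 p)) -> In b (map holder (seq 0 p)) ->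
     a <> b -> coord a <> coord b) ->
  (* the backoff function is bijective *)
  bijectiveR f ->
  (p < capacity Dact Dsleep)%nat ->
  forall i, (i < p)%nat ->
    exists k : nat,
      In (i, Delivered k)
         (run (backoff f coord holder) holder (capacity Dact Dsleep) 0 (seq 0 p))
      /\ INR (S k) * Dact <= Dact + Dsleep.
Proof.
  intros HD HS _ Huniq [Hinj _] Hcap i Hi.
  destruct (run_delivers_all (backoff f coord holder) holder
              (capacity Dact Dsleep) 0 (seq 0 p) i) as [k [Hdel Hk]].
  - exact (unique_coords_determine_holder p holder coord f Hinj Huniq).
  - rewrite length_seq. lia.
  - apply in_seq. lia.
  - exists k. split; [exact Hdel|].
    rewrite length_seq in Hk.
    apply periods_fit_duty_cycle; [exact HD|exact HS|lia].
Qed.
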